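(* Let $d\geq 1$. There exist $e_1,e_2,e_3,e_4\in\mathbb{F}_{2^d}$ such that $t^5+t^4+e_1t^3+e_2t^2+e_3t+e_4$ is irreducible over $\mathbb{F}_{2^d}$ and no three of its (distinct) roots in an algebraic closure sum to $0$. *)

From HB Require Import structures.
From mathcomp Require Import all_boot all_order all_algebra all_field.
Set Implicit Arguments. Unset Strict Implicit. Unset Printing Implicit Defensive.
Import GRing.Theory.
Local Open Scope ring_scope.

Definition quintic (F : nzRingType) (e1 e2 e3 e4 : F) : {poly F} :=
  'X^5 + 'X^4 + e1%:P * 'X^3 + e2%:P * 'X^2 + e3%:P * 'X + e4%:P.

From HB Require Import structures.
From mathcomp Require Import all_boot all_order all_algebra all_solvable all_field.
Set Implicit Arguments. Unset Strict Implicit. Unset Printing Implicit Defensive.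
Import GRing.Theory.
Local Open Scope ring_scope.

(* Let q = #|F| and let n be a prime.  For a morphism f : F -> L into any
   field, the Frobenius map w |-> w ^+ q is a ring endomorphism of L fixing
   exactly the image of F.  If P is a monic irreducible polynomial of degree n
   over F dividing X^(q^n) - X, then every root w of P in L has the n distinct
   conjugates w, w^q, ..., w^(q^(n-1)) and P factors over L as the product of
   the X - w^(q^i); in particular the trace Tr(w) = sum_i w^(q^i) of every root
   equals minus the coefficient of X^(n-1) in P.  Since Tr is additive, if
   this coefficient is -1 then three roots summing to 0 would give 3 = Tr 0 = 0,
   which is impossible when 3 is invertible.
   Such a P exists whenever n is invertible in F: an element b of Frobenius
   period exactly n lies in the splitting field of X^(q^n) - X (counting
   roots), the shift a = b + (1 - Tr b)/n has trace 1 and the same period, and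
   the minimal polynomial of a over F is the required P.
   For F of characteristic 2 and n = 5, the coefficient -1 equals 1, so P has
   the shape t^5 + t^4 + e1 t^3 + e2 t^2 + e3 t + e4, which is the theorem. *)

Lemma finField_card_pchar (F : finFieldType) :
  exists2 p, p \in [pchar F] & exists k, #|F| = (p ^ k.+1)%N.
Proof.
have [p _ charFp] := finPcharP F; exists p => //.
have /p_natP[[|k] cardF] : p.-nat #|F|.
  by rewrite -cardsT; apply/abelem_pgroup/fin_ring_pchar_abelem.
- by have := finNzRing_gt1 F; rewrite cardF.
- by exists k.
Qed.

Lemma pnat_card (F : finFieldType) : [pchar F].-nat #|F|.
Proof.
have [ch charF [k ->]] := finField_card_pchar F.
by rewrite pnatX pnatE ?(pcharf_prime charF) ?charF.
Qed.

Lemma natr_card (F : finFieldType) : #|F|%:R = 0 :> F.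
Proof.
have [ch charF [k ->]] := finField_card_pchar F.
by rewrite natrX (pcharf0 charF) expr0n.
Qed.

Section FrobeniusPower.
Variables (K : fieldType) (q : nat).
Hypothesis charK_q : [pchar K].-nat q.

Definition frob_pow (x : K) := x ^+ q.

Lemma frob_pow_is_zmod : zmod_morphism frob_pow.
Proof. by move=> x y; rewrite /frob_pow exprDn_pchar // exprNn_pchar. Qed.

Lemma frob_pow_is_monoid : monoid_morphism frob_pow.
Proof. by split=> [|x y]; rewrite /frob_pow ?expr1n ?exprMn. Qed.

HB.instance Definition _ := GRing.isZmodMorphism.Build K K frob_pow frob_pow_is_zmod.
HB.instance Definition _ := GRing.isMonoidMorphism.Build K K frob_pow frob_pow_is_monoid.

Definition frob_pow_rmorph : {rmorphism K -> K} := frob_pow.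

End FrobeniusPower.

(* If x is fixed by h^m and h^n with m, n coprime, then it is fixed by h
   (Bezout: a m = b n + 1). *)
Lemma iter_coprime_fixed (T : Type) (h : T -> T) (x : T) (m n : nat) :
  coprime m n -> (0 < m)%N -> iter m h x = x -> iter n h x = x -> h x = x.
Proof.
move=> co_mn m_gt0 hm hn.
have iter_mul j r : iter j h x = x -> iter (r * j) h x = x.
  by move=> hj; elim: r => [|r IH]; rewrite ?mul0n // mulSn iterD IH.
case: (egcdnP n m_gt0) => a b ab _; move: ab; rewrite (eqP co_mn) addn1 => ab.
by rewrite -[in RHS](iter_mul _ a hm) ab iterS iter_mul.
Qed.

Lemma big_iter_rot (R : Type) (idx : R) (op : Monoid.com_law idx)
    (T : Type) (h : T -> T) (x : T) (n : nat) (G : T -> R) :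
  iter n h x = x ->
  \big[op/idx]_(i < n) G (h (iter i h x)) = \big[op/idx]_(i < n) G (iter i h x).
Proof.
case: n => [|n] hx; first by rewrite !big_ord0.
rewrite big_ord_recr big_ord_recl /=.
have -> : h (iter n h x) = x := hx.
by rewrite Monoid.mulmC; apply: congr2.
Qed.

Lemma irreducible_no_root (F : fieldType) (P : {poly F}) (c : F) :
  irreducible_poly P -> size P != 2 -> ~~ root P c.
Proof.
move=> [_ irrP] sP; apply/negP; rewrite -dvdp_XsubCl => /irrP.
rewrite size_XsubC => /(_ isT) /eqp_size.
by rewrite size_XsubC => eP; move: sP; rewrite -eP.
Qed.

Section Conjugates.
Variables (F : finFieldType) (L : fieldType) (f : {rmorphism F -> L}).

Lemma pnat_card_map : [pchar L].-nat #|F|.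
Proof. by rewrite (eq_pnat _ (fmorph_pchar f)) pnat_card. Qed.

Definition frob : {rmorphism L -> L} := frob_pow_rmorph pnat_card_map.

Lemma frobE w : frob w = w ^+ #|F|. Proof. by []. Qed.

Lemma frob_map c : frob (f c) = f c.
Proof. by rewrite frobE -rmorphXn expf_card. Qed.

(* ... and nothing else, since X^#|F| - X splits over F with roots F. *)
Lemma frob_fixed w : frob w = w -> exists c, w = f c.
Proof.
move=> fw; have : root (map_poly f ('X^#|F| - 'X)) w.
  by rewrite rmorphB /= map_polyXn map_polyX rootE !(hornerE, hornerXn) -frobE fw subrr.
rewrite finField_genPoly rmorph_prod.
have -> : \prod_(c : F) map_poly f ('X - c%:P) = \prod_(z <- [seq f c | c : F]) ('X - z%:P).
  by rewrite big_image /=; apply: eq_bigr => c _; rewrite rmorphB /= map_polyX map_polyC.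
by rewrite root_prod_XsubC => /mapP[c _ ->]; exists c.
Qed.

Lemma iter_frobE i w : iter i frob w = w ^+ (#|F| ^ i).
Proof.
elim: i => [|i IH]; first by rewrite expr1.
by rewrite iterS IH frobE expnSr exprM.
Qed.

Lemma iter_frob_inj i : injective (iter i frob).
Proof.
by elim: i => [|i IH] x y //; rewrite !iterS => /fmorph_inj /IH.
Qed.

Lemma root_iter_frob (P : {poly F}) w i :
  root (map_poly f P) w -> root (map_poly f P) (iter i frob w).
Proof.
have frobP : map_poly frob (map_poly f P) = map_poly f P.
  by rewrite -map_poly_comp; apply: eq_map_poly => c /=; rewrite frob_map.
move=> rw; elim: i => //= i IH.
by rewrite -frobP rootE horner_map (eqP IH) rmorph0.
Qed.

Definition conjugates (n : nat) (w : L) := mkseq (fun i => iter i frob w) n.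

Lemma uniq_conjugates n w :
  prime n -> iter n frob w = w -> frob w != w -> uniq (conjugates n w).
Proof.
move=> n_prime wn nofix; apply/mkseq_uniqP => i j; rewrite !inE => lt_i lt_j.
wlog le_ij : i j lt_i lt_j / (i <= j)%N.
  move=> W; case/orP: (leq_total i j) => le; first exact: W.
  by move=> /esym E; apply/esym; apply: W E.
rewrite -(subnKC le_ij) iterD => /iter_frob_inj fixed.
suff /eqP -> : (j - i == 0)%N by rewrite addn0.
apply: contraNT nofix; rewrite -lt0n => pos; apply/eqP.
apply: (iter_coprime_fixed _ pos (esym fixed) wn).
by rewrite coprime_sym prime_coprime // gtnNdvd // (leq_ltn_trans (leq_subr _ _) lt_j).
Qed.

Lemma big_conjugates (R : Type) (idx : R) (op : Monoid.com_law idx) n w (G : L -> R) :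
  \big[op/idx]_(z <- conjugates n w) G z = \big[op/idx]_(i < n) G (iter i frob w).
Proof.
have iotaE : iota 0 n = index_iota 0 n by rewrite /index_iota subn0.
by rewrite big_map iotaE big_mkord.
Qed.

Lemma root_dvd_period n (P : {poly F}) w :
  P %| 'X^(#|F| ^ n) - 'X -> root (map_poly f P) w -> iter n frob w = w.
Proof.
rewrite -(dvdp_map f) rmorphB /= map_polyXn map_polyX => /dvdpP[r def_r] rw.
have : root ('X^(#|F| ^ n) - 'X) w by rewrite def_r rootM rw orbT.
by rewrite rootE !(hornerE, hornerXn) subr_eq0 iter_frobE => /eqP.
Qed.

Lemma map_poly_conjugates n (P : {poly F}) w :
  prime n -> P \is monic -> size P = n.+1 -> irreducible_poly P ->
  P %| 'X^(#|F| ^ n) - 'X -> root (map_poly f P) w ->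
  map_poly f P = \prod_(z <- conjugates n w) ('X - z%:P).
Proof.
move=> n_prime monP sizeP irrP dvdP rw.
have nofix : frob w != w.
  apply: contraTneq rw => /frob_fixed[c ->].
  rewrite rootE horner_map fmorph_eq0 -rootE irreducible_no_root //.
  by rewrite sizeP eqSS gtn_eqF ?prime_gt1.
rewrite [LHS](all_roots_prod_XsubC (rs := conjugates n w)).
- by rewrite lead_coef_map (monicP monP) rmorph1 scale1r.
- by rewrite size_map_poly sizeP size_mkseq.
- by apply/allP => z /mapP[i _ ->]; apply: root_iter_frob.
- by rewrite uniq_rootsE uniq_conjugates // (root_dvd_period dvdP rw).
Qed.

Definition trace n w := \sum_(i < n) iter i frob w.

Lemma iter_frobD i a b : iter i frob (a + b) = iter i frob a + iter i frob b.
Proof. by elim: i => [|i IH] //; rewrite !iterS IH rmorphD. Qed.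

Lemma traceD n a b : trace n (a + b) = trace n a + trace n b.
Proof. by rewrite /trace -big_split; apply: eq_bigr => i _; apply: iter_frobD. Qed.

Lemma trace_fixed n c : frob c = c -> trace n c = c *+ n.
Proof.
move=> fc; rewrite /trace (eq_bigr (fun=> c)) ?sumr_const ?card_ord // => i _.
exact: iter_fix.
Qed.

Lemma frob_trace n w : iter n frob w = w -> frob (trace n w) = trace n w.
Proof. by move=> wn; rewrite rmorph_sum; exact: (big_iter_rot _ id wn). Qed.

Lemma frob_prod_conjugates n w : iter n frob w = w ->
  map_poly frob (\prod_(z <- conjugates n w) ('X - z%:P)) =
  \prod_(z <- conjugates n w) ('X - z%:P).
Proof.
move=> wn; rewrite !big_conjugates rmorph_prod.
rewrite (eq_bigr (fun i : 'I_n => 'X - (frob (iter i frob w))%:P)) => [|i _]; last first.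
  exact: map_polyXsubC.
exact: (big_iter_rot _ (fun z => 'X - z%:P) wn).
Qed.

Lemma trace_root n (P : {poly F}) w :
  prime n -> P \is monic -> size P = n.+1 -> irreducible_poly P ->
  P %| 'X^(#|F| ^ n) - 'X -> root (map_poly f P) w ->
  f P`_n.-1 = - trace n w.
Proof.
move=> n_prime monP sizeP irrP dvdP rw.
rewrite -coef_map (map_poly_conjugates n_prime monP sizeP irrP dvdP rw).
have n_neq0 : n != 0%N by rewrite -lt0n prime_gt0.
have := coefPn_prod_XsubC (ps := conjugates n w).
by rewrite size_mkseq (big_conjugates _ _ _ id) => /(_ n_neq0) ->.
Qed.

Lemma three_roots_sum_neq0 n (P : {poly F}) x y z :
  prime n -> P \is monic -> size P = n.+1 -> irreducible_poly P ->
  P %| 'X^(#|F| ^ n) - 'X -> P`_n.-1 = -1 -> 3%:R != 0 :> F ->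
  root (map_poly f P) x -> root (map_poly f P) y -> root (map_poly f P) z ->
  x + y + z != 0.
Proof.
move=> n_prime monP sizeP irrP dvdP coefP three_neq0 rx ry rz.
have trace1 w : root (map_poly f P) w -> trace n w = 1.
  move=> rw; apply: oppr_inj.
  by rewrite -(trace_root n_prime monP sizeP irrP dvdP rw) coefP rmorphN1.
apply: contra_neq three_neq0 => sum0; apply: (fmorph_inj f).
have := congr1 (trace n) sum0.
rewrite !traceD (trace1 x rx) (trace1 y ry) (trace1 z rz).
rewrite (trace_fixed _ (rmorph0 _)) mul0rn rmorph0 rmorph_nat => <-.
by rewrite !mulrS mulr0n addr0 addrA.
Qed.

End Conjugates.

Lemma irreducible_minPoly1 (K : fieldType) (L : fieldExtType K) (a : L) (P : {poly K}) :
  minPoly 1%AS a = map_poly (in_alg L) P -> irreducible_poly P.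
Proof.
move=> mP; split; first by rewrite -(size_map_poly (in_alg L)) -mP size_minPoly.
move=> D sD dD.
have D_over : map_poly (in_alg L) D \is a polyOver 1%AS by apply/polyOver1P; exists D.
have D_dvd : map_poly (in_alg L) D %| minPoly 1%AS a by rewrite mP dvdp_map.
case/orP: (minPoly_irr D_over D_dvd); first by rewrite mP eqp_map.
rewrite -(rmorph1 (map_poly (in_alg L))) eqp_map => /eqp_size.
by rewrite size_poly1 => sD1; rewrite sD1 in sD.
Qed.

Section Existence.
Variables (F : finFieldType) (n : nat).
Hypothesis n_prime : prime n.

(* Some element of a finite extension has Frobenius period exactly n: there
   are #|F|^n distinct roots of X^(#|F|^n) - X but only #|F| fixed points. *)
Lemma exists_primitive_elt : exists (L : splittingFieldType F) (b : L),
  iter n (frob (in_alg L)) b = b /\ frob (in_alg L) b != b.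
Proof.
set N := (#|F| ^ n)%N.
have F_gt1 := finNzRing_gt1 F.
have N_gt1 : (1 < N)%N by rewrite -(expn0 #|F|) ltn_exp2l ?prime_gt0.
have sizeX (R : nzRingType) m : (1 < m)%N -> size ('X^m - 'X : {poly R}) = m.+1.
  by move=> m_gt1; rewrite size_polyDl size_polyXn // size_polyN size_polyX ltnS.
have nz : 'X^N - 'X != 0 :> {poly F} by rewrite -size_poly_eq0 sizeX.
case: (FinSplittingFieldFor nz) => L [rs Hrs _]; exists L.
rewrite rmorphB /= map_polyXn map_polyX in Hrs.
have N0 : N%:R = 0 :> L.
  by rewrite natrX -(rmorph_nat (in_alg L)) natr_card rmorph0 expr0n eqn0Ngt prime_gt0.
have sep : separable_poly ('X^N - 'X : {poly L}).
  rewrite unlock derivB derivXn derivX -scaler_nat N0 scale0r sub0r.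
  have -> : - 1 = (- 1) *: 1 :> {poly L} by rewrite scaleN1r.
  by rewrite coprimepZr ?coprimep1 // oppr_eq0 oner_eq0.
have urs : uniq rs by rewrite -separable_prod_XsubC -(eqp_separable Hrs).
have srs : size rs = N.
  by have := eqp_size Hrs; rewrite size_prod_XsubC sizeX // => -[].
have rrs b : b \in rs -> b ^+ N = b.
  move=> brs; have : root (\prod_(z <- rs) ('X - z%:P)) b by rewrite root_prod_XsubC.
  by rewrite -(eqp_root Hrs) rootE !(hornerE, hornerXn) subr_eq0 => /eqP.
case: (boolP (has (fun b => b ^+ #|F| != b) rs)) => [/hasP[b brs nb] | ].
  by exists b; rewrite iter_frobE frobE rrs.
rewrite has_predC negbK => /allP al.
have : (size rs < size (('X^#|F| - 'X)%R : {poly L}))%N.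
  apply: max_poly_roots => //; first by rewrite -size_poly_eq0 sizeX.
  by apply/allP => b /al /eqP bq; rewrite rootE !(hornerE, hornerXn) bq subrr.
have F_lt_N : (#|F| < N)%N by rewrite /N -{1}(expn1 #|F|) ltn_exp2l // prime_gt1.
by rewrite srs sizeX // ltnS leqNgt F_lt_N.
Qed.

Lemma minPoly_of_primitive_elt (L : fieldExtType F) (a : L) :
  iter n (frob (in_alg L)) a = a -> frob (in_alg L) a != a ->
  exists P : {poly F}, [/\ P \is monic, size P = n.+1, irreducible_poly P,
    P %| 'X^(#|F| ^ n) - 'X & root (map_poly (in_alg L) P) a].
Proof.
move=> an nofix.
have [P mP] : exists P, minPoly 1%AS a = map_poly (in_alg L) P.
  by apply/polyOver1P; apply: minPolyOver.
have rootP : root (map_poly (in_alg L) P) a by rewrite -mP root_minPoly.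
pose Pa := \prod_(z <- conjugates (in_alg L) n a) ('X - z%:P).
have Pa_over : Pa \is a polyOver 1%AS.
  apply/polyOverP => i; rewrite Fermat's_little_theorem dimv1 expn1.
  by rewrite -(frobE (in_alg L)) -coef_map frob_prod_conjugates.
have size_le : (size P <= n.+1)%N.
  rewrite -(size_map_poly (in_alg L)) -mP.
  have <- : size Pa = n.+1 by rewrite size_prod_XsubC size_mkseq.
  apply: dvdp_leq; first by apply/monic_neq0/monic_prod_XsubC.
  apply: minPoly_dvdp Pa_over _; rewrite root_prod_XsubC; apply/mapP.
  by exists 0%N; rewrite // mem_iota prime_gt0.
have size_gt : (n < size P)%N.
  rewrite -(size_map_poly (in_alg L)) -mP.
  rewrite -[X in (X < _)%N](size_mkseq (fun i => iter i (frob (in_alg L)) a) n).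
  apply: max_poly_roots; first exact/monic_neq0/monic_minPoly.
    by rewrite mP; apply/allP => z /mapP[i _ ->]; apply: root_iter_frob.
  exact: uniq_conjugates.
exists P; split.
- by rewrite -(map_monic (in_alg L)) -mP monic_minPoly.
- by apply/eqP; rewrite eqn_leq size_le.
- exact: irreducible_minPoly1 mP.
- rewrite -(dvdp_map (in_alg L)) -mP; apply: minPoly_dvdp.
    by apply/polyOver1P; eexists.
  rewrite rmorphB /= map_polyXn map_polyX rootE !(hornerE, hornerXn).
  by rewrite -(iter_frobE (in_alg L)) an subrr.
- exact: rootP.
Qed.

Hypothesis n_neq0 : n%:R != 0 :> F.

(* Shifting by the F-element (1 - Tr b)/n produces trace 1. *)
Lemma exists_trace_one : exists (L : splittingFieldType F) (a : L),
  [/\ iter n (frob (in_alg L)) a = a, frob (in_alg L) a != a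
     & trace (in_alg L) n a = 1].
Proof.
have [L [b [bn nofix]]] := exists_primitive_elt.
have nL : n%:R != 0 :> L by rewrite -(rmorph_nat (in_alg L)) fmorph_eq0.
pose c := (1 - trace (in_alg L) n b) / n%:R.
have fc : frob (in_alg L) c = c.
  by rewrite fmorph_div rmorphB rmorph1 frob_trace // rmorph_nat.
exists L, (b + c); split.
- by rewrite iter_frobD bn iter_fix.
- by rewrite rmorphD fc (inj_eq (addIr c)).
- by rewrite traceD (trace_fixed _ fc) -mulr_natr divfK // addrC subrK.
Qed.

Lemma exists_irreducible_trace : exists P : {poly F},
  [/\ P \is monic, size P = n.+1, irreducible_poly P,
     P %| 'X^(#|F| ^ n) - 'X & P`_n.-1 = -1].
Proof.
have [L [a [an nofix trace_a]]] := exists_trace_one.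
have [P [monP sizeP irrP dvdP rootP]] := minPoly_of_primitive_elt an nofix.
exists P; split => //; apply: (fmorph_inj (in_alg L)).
by rewrite (trace_root n_prime monP sizeP irrP dvdP rootP) trace_a rmorphN1.
Qed.

End Existence.

Lemma quinticE (F : nzRingType) (P : {poly F}) :
  P \is monic -> size P = 6%N -> P`_4 = 1 -> P = quintic P`_3 P`_2 P`_1 P`_0.
Proof.
move=> monP sizeP P4; have P5 : P`_5 = 1 by rewrite -(monicP monP) lead_coefE sizeP.
apply/polyP => i; rewrite /quintic !coefD !coefCM !coefXn coefX coefC.
case: i => [|[|[|[|[|[|i]]]]]] /=; rewrite ?mulr0 ?mulr1 ?addr0 ?add0r //.
by rewrite nth_default // sizeP.
Qed.

Theorem proposition7p11 (d : nat) (F : finFieldType) :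
  (1 <= d)%N -> #|F| = (2 ^ d)%N ->
  exists e1 e2 e3 e4 : F,
    irreducible_poly (quintic e1 e2 e3 e4) /\
    forall (L : fieldType) (f : {rmorphism F -> L}) (x y z : L),
      x != y -> y != z -> x != z ->
      root (map_poly f (quintic e1 e2 e3 e4)) x ->
      root (map_poly f (quintic e1 e2 e3 e4)) y ->
      root (map_poly f (quintic e1 e2 e3 e4)) z ->
      x + y + z != 0.
Proof.
move=> _ cardF; have char2 : (2 \in [pchar F])%N := card_finPcharP cardF isT.
have five_neq0 : 5%:R != 0 :> F by rewrite -(GRing.natr_mod_pchar char2) oner_neq0.
have three_neq0 : 3%:R != 0 :> F by rewrite -(GRing.natr_mod_pchar char2) oner_neq0.
have [P [monP sizeP irrP dvdP coefP]] := exists_irreducible_trace (isT : prime 5) five_neq0.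
have P4 : P`_4 = 1 by rewrite coefP (oppr_pchar2 char2).
exists P`_3, P`_2, P`_1, P`_0; rewrite -quinticE //; split => // L f x y z _ _ _.
exact: three_roots_sum_neq0 (isT : prime 5) monP sizeP irrP dvdP coefP three_neq0.
Qed.
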